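(* Let $\rho=(R,V,\beta,\Phi)$ be a form ring such that at least one code of Type $\rho$ exists. Then $$\gcd\{N\ge1:\exists\ C\le V^N \text{ of Type }\rho\}=\min\{N\ge1:\exists\ C\le V^N\text{ of Type }\rho\}.$$
   Context: Let $R$ be a finite ring with $1$ and $V$ a finite left $R$-module. $\mathrm{Bil}(V,\mathbb Q/\mathbb Z)$ denotes the group of $\mathbb Z$-bilinear maps $V\times V\to\mathbb Q/\mathbb Z$; for $\beta$ in it and $r\in R$ write $\beta_r(v,w):=\beta(v,rw)$ and $\beta^\tau(v,w):=\beta(w,v)$. $\beta$ is nonsingular if $v\mapsto\beta(v,\cdot)$ is an isomorphism $V\to\mathrm{Hom}(V,\mathbb Q/\mathbb Z)$. $\mathrm{Quad}_0(V,\mathbb Q/\mathbb Z)$ is the group of maps $\phi:V\to\mathbb Q/\mathbb Z$ with $\phi(0)=0$ and $\phi(x+y+z)-\phi(x+y)-\phi(x+z)-\phi(y+z)+\phi(x)+\phi(y)+\phi(z)=0$ for all $x,y,z\in V$. For $r\in R$ put $(\phi[r])(v):=\phi(rv)$; a sub-$R$-qmodule of $\mathrm{Quad}_0(V,\mathbb Q/\mathbb Z)$ is a subgroup closed under all maps $\phi\mapsto\phi[r]$. Define $\{\!\{\beta\}\!\}(v):=\beta(v,v)$ and $\lambda(\phi)(v,w):=\phi(v+w)-\phi(v)-\phi(w)$. $\beta$ is admissible if it is nonsingular, $M:=\{\beta_r:r\in R\}$ is closed under $\tau$, and $r\mapsto\beta_r$ is a bijection $R\to M$. A form ring is a quadruple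 $\rho=(R,V,\beta,\Phi)$ with $\beta$ admissible and $\Phi$ a sub-$R$-qmodule of $\mathrm{Quad}_0(V,\mathbb Q/\mathbb Z)$ such that $\{\!\{m\}\!\}\in\Phi$ for all $m\in M$ and $\lambda(\Phi)\subseteq M$. A code of length $N$ is a left $R$-submodule $C\le V^N$; $C^\perp=\{x\in V^N:\sum_i\beta(x_i,c_i)=0\ \forall c\in C\}$; $C$ is self-dual if $C=C^\perp$, isotropic if $\sum_i\phi(c_i)=0$ for all $c\in C,\phi\in\Phi$; a code of Type $\rho$ is a self-dual isotropic code. *)

From HB Require Import structures.
From mathcomp Require Import all_boot all_order all_algebra.
From mathcomp Require Import ring lra.
Set Implicit Arguments. Unset Strict Implicit. Unset Printing Implicit Defensive.
Import Order.TTheory GRing.Theory Num.Theory.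
Local Open Scope ring_scope.

(* The group Q/Z, realised as the rationals in [0,1) with addition    *)
(* modulo 1.                                                           *)

Definition fracq (x : rat) : rat := x - (Num.floor x)%:~R.

Lemma fracq_range x : 0 <= fracq x < 1.
Proof.
have /andP[h1 h2] := floor_itv x.
rewrite intrD in h2; rewrite /fracq; apply/andP; split; lra.
Qed.

Lemma fracq_uniq x y (n : int) : 0 <= y < 1 -> x = y + n%:~R -> fracq x = y.
Proof.
move=> /andP[y0 y1] ->; rewrite /fracq.
suff -> : Num.floor (y + n%:~R) = n by rewrite addrK.
apply: floor_def; rewrite intrD; apply/andP; split; lra.
Qed.

Lemma fracq_id x : 0 <= x < 1 -> fracq x = x.
Proof. by move=> h; apply: (@fracq_uniq _ _ 0) => //; rewrite addr0. Qed.

Lemma fracqK x : fracq (fracq x) = fracq x.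
Proof. exact/fracq_id/fracq_range. Qed.

Lemma fracqDl x y : fracq (fracq x + y) = fracq (x + y).
Proof.
apply: (@fracq_uniq _ _ (Num.floor (x + y) - Num.floor x)); first exact: fracq_range.
rewrite /fracq intrB; ring.
Qed.

Lemma fracqDr x y : fracq (x + fracq y) = fracq (x + y).
Proof. by rewrite addrC fracqDl addrC. Qed.

Record qz := QZ { qzval : rat; qzP : fracq qzval == qzval }.

HB.instance Definition _ := [isSub for qzval].
HB.instance Definition _ := [Equality of qz by <:].
HB.instance Definition _ := [Choice of qz by <:].

Definition mkqz (x : rat) : qz := QZ (introT eqP (fracqK x)).

Definition qz0 : qz := mkqz 0.
Definition qzopp (a : qz) : qz := mkqz (- qzval a).
Definition qzadd (a b : qz) : qz := mkqz (qzval a + qzval b).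

Lemma qzvalK (a : qz) : fracq (qzval a) = qzval a.
Proof. exact/eqP/qzP. Qed.

Lemma qz_eq (a b : qz) : qzval a = qzval b -> a = b.
Proof. exact: val_inj. Qed.

Lemma qzaddA : associative qzadd.
Proof.
move=> a b c; apply: qz_eq => /=.
by rewrite fracqDr fracqDl addrA.
Qed.

Lemma qzaddC : commutative qzadd.
Proof. by move=> a b; apply: qz_eq => /=; rewrite addrC. Qed.

Lemma qzadd0 : left_id qz0 qzadd.
Proof.
move=> a; apply: qz_eq => /=.
by rewrite (@fracq_id 0) ?lexx ?ltr01 // add0r qzvalK.
Qed.

Lemma qzaddN : left_inverse qz0 qzopp qzadd.
Proof.
move=> a; apply: qz_eq => /=.
by rewrite fracqDl addNr.
Qed.

HB.instance Definition _ := GRing.isZmodule.Build qz qzaddA qzaddC qzadd0 qzaddN.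

Section FormRing.
Variables (R : finNzRingType) (V : finLmodType R).

Definition biadditive (b : V -> V -> qz) : Prop :=
  (forall v v' w, b (v + v') w = b v w + b v' w) /\
  (forall v w w', b v (w + w') = b v w + b v w').

Definition additive_qz (f : V -> qz) : Prop :=
  forall v w, f (v + w) = f v + f w.

Definition bil_r (b : V -> V -> qz) (r : R) : V -> V -> qz :=
  fun v w => b v (r *: w).
Definition bil_tau (b : V -> V -> qz) : V -> V -> qz := fun v w => b w v.

Definition nonsingular (b : V -> V -> qz) : Prop :=
  (forall v v', (forall w, b v w = b v' w) -> v = v') /\
  (forall f : V -> qz, additive_qz f -> exists v, forall w, f w = b v w).

Definition admissible (b : V -> V -> qz) : Prop :=
  [/\ biadditive b, nonsingular b,
      (forall r : R, exists s : R, forall v w, bil_tau (bil_r b r) v w = bil_r b s v w) &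
      (* r |-> beta_r is injective (hence a bijection R -> M) *)
      (forall r s : R, (forall v w, bil_r b r v w = bil_r b s v w) -> r = s)].

Definition quad0 (phi : V -> qz) : Prop :=
  phi 0 = 0 /\
  forall x y z : V,
    phi (x + y + z) - phi (x + y) - phi (x + z) - phi (y + z)
      + phi x + phi y + phi z = 0.

Definition qshift (phi : {ffun V -> qz}) (r : R) : {ffun V -> qz} :=
  [ffun v => phi (r *: v)].

Definition qdiag (b : V -> V -> qz) : {ffun V -> qz} := [ffun v => b v v].

Definition qlambda (phi : {ffun V -> qz}) : V -> V -> qz :=
  fun v w => phi (v + w) - phi v - phi w.

Definition sub_qmodule (Phi : {ffun V -> qz} -> Prop) : Prop :=
  [/\ (forall phi, Phi phi -> quad0 phi),
      Phi 0,
      (forall phi psi, Phi phi -> Phi psi -> Phi (phi - psi)) &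
      (forall phi r, Phi phi -> Phi (qshift phi r))].

Definition form_ring (b : V -> V -> qz) (Phi : {ffun V -> qz} -> Prop) : Prop :=
  [/\ admissible b, sub_qmodule Phi,
      (forall r : R, Phi (qdiag (bil_r b r))) &
      (forall phi, Phi phi -> exists r : R, forall v w, qlambda phi v w = bil_r b r v w)].

Definition is_code (N : nat) (C : {set {ffun 'I_N -> V}}) : Prop :=
  0 \in C /\ forall (r : R) x y, x \in C -> y \in C -> r *: x + y \in C.

Definition self_dual (b : V -> V -> qz) (N : nat) (C : {set {ffun 'I_N -> V}}) : Prop :=
  forall x : {ffun 'I_N -> V},
    x \in C <-> (forall c, c \in C -> \sum_(i < N) b (x i) (c i) = 0).

Definition isotropic (Phi : {ffun V -> qz} -> Prop) (N : nat)
    (C : {set {ffun 'I_N -> V}}) : Prop :=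
  forall c, c \in C -> forall phi, Phi phi -> \sum_(i < N) phi (c i) = 0.

Definition code_of_type (b : V -> V -> qz) (Phi : {ffun V -> qz} -> Prop)
    (N : nat) (C : {set {ffun 'I_N -> V}}) : Prop :=
  [/\ is_code C, self_dual b C & isotropic Phi C].

Definition type_length (b : V -> V -> qz) (Phi : {ffun V -> qz} -> Prop) (N : nat) : Prop :=
  (0 < N)%N /\ exists C : {set {ffun 'I_N -> V}}, code_of_type b Phi C.

End FormRing.

Definition is_min_of (S : nat -> Prop) (n : nat) : Prop :=
  S n /\ forall m, S m -> (n <= m)%N.

Definition is_gcd_of (S : nat -> Prop) (d : nat) : Prop :=
  (forall m, S m -> (d %| m)%N) /\
  (forall e, (forall m, S m -> (e %| m)%N) -> (e %| d)%N).

From HB Require Import structures.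
From mathcomp Require Import all_boot all_order all_algebra all_fingroup.
From Stdlib Require Import Classical Wf_nat.
Import GRing.Theory Num.Theory FinRing.Theory.
Set Implicit Arguments.
Unset Strict Implicit.
Unset Printing Implicit Defensive.
Local Open Scope ring_scope.

(* Let n be the least length of a code of Type rho.  Everything reduces to
   cancellation: from codes L of length p + n and D of length n one gets a
   code of length p, namely the residual code {a | (a, d) \in L for some
   d \in D}.  It is isotropic and self-orthogonal because L and D are; it is
   maximal because, the form being nonsingular, every subgroup of V^N is its
   own double orthogonal.  That last fact rests on Q/Z being divisible:
   additive maps into Q/Z extend from subgroups one generator at a time, so
   characters separate a subgroup from any point outside it. *)

Lemma mkqzD x y : mkqz (x + y) = mkqz x + mkqz y.
Proof. by apply: qz_eq => /=; rewrite fracqDl fracqDr. Qed.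

Lemma mkqzMn x n : mkqz (x *+ n) = mkqz x *+ n.
Proof. by elim: n => [|n IH] //; rewrite !mulrS mkqzD IH. Qed.

Lemma mkqz_val (c : qz) : mkqz (qzval c) = c.
Proof. by apply: qz_eq => /=; rewrite qzvalK. Qed.

Lemma qz_divisible (c : qz) n : (0 < n)%N -> exists t : qz, t *+ n = c.
Proof.
move=> n_gt0; exists (mkqz (qzval c / n%:R)); rewrite -mkqzMn -[_ *+ n]mulr_natr.
by rewrite mulfVK ?pnatr_eq0 -?lt0n // mkqz_val.
Qed.

Lemma qz_torsion n : (1 < n)%N -> exists2 t : qz, t *+ n = 0 & t != 0.
Proof.
move=> n_gt1; have n_gt0 := ltnW n_gt1.
have n'_itv : 0 <= (n%:R : rat)^-1 < 1.
  by rewrite invr_ge0 ler0n /= invf_lt1 ?ltr0n ?ltr1n.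
exists (mkqz n%:R^-1).
  rewrite -mkqzMn -[_ *+ n]mulr_natr mulVf ?pnatr_eq0 -?lt0n //.
  by apply: qz_eq; rewrite /= (@fracq_uniq 1 0 1) ?lexx ?ltr01 ?add0r.
apply/eqP => /(congr1 qzval) /=; rewrite (fracq_id n'_itv) (@fracq_id 0) ?lexx ?ltr01 //.
by apply/eqP; rewrite invr_eq0 pnatr_eq0 -lt0n.
Qed.

Section Characters.
Variable G : finZmodType.
Implicit Types (H : {set G}) (f : G -> qz) (x y g : G).

Definition is_subgroup H := 0 \in H /\ {in H &, forall x y, x - y \in H}.

Definition additive_on H f := {in H &, {morph f : x y / x + y}}.

Section Subgroup.
Variables (H : {set G}) (f : G -> qz).
Hypotheses (H_sub : is_subgroup H) (f_add : additive_on H f).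

Lemma subgroup0 : 0 \in H. Proof. by case: H_sub. Qed.

Lemma subgroupB x y : x \in H -> y \in H -> x - y \in H.
Proof. by case: H_sub => _; apply. Qed.

Lemma subgroupN x : x \in H -> - x \in H.
Proof. by move=> Hx; rewrite -sub0r subgroupB ?subgroup0. Qed.

Lemma subgroupD x y : x \in H -> y \in H -> x + y \in H.
Proof. by move=> Hx Hy; rewrite -[y]opprK subgroupB ?subgroupN. Qed.

Lemma subgroupMn x n : x \in H -> x *+ n \in H.
Proof. by move=> Hx; elim: n => [|n IH]; rewrite ?subgroup0 // mulrS subgroupD. Qed.

Lemma subgroupMz x (k : int) : x \in H -> x *~ k \in H.
Proof.
by move=> Hx; case: k => n; [|rewrite NegzE mulrNz subgroupN //]; apply: subgroupMn.
Qed.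

Lemma additive_on0 : f 0 = 0.
Proof.
by apply: (addrI (f 0)); rewrite -f_add ?subgroup0 // !addr0.
Qed.

Lemma additive_onN x : x \in H -> f (- x) = - f x.
Proof.
move=> Hx; apply/eqP; rewrite -subr_eq0 opprK addrC -f_add ?subgroupN //.
by rewrite subrr additive_on0.
Qed.

Lemma additive_onMn x n : x \in H -> f (x *+ n) = f x *+ n.
Proof.
move=> Hx; elim: n => [|n IH]; first exact: additive_on0.
by rewrite !mulrS f_add ?subgroupMn // IH.
Qed.

Lemma additive_onMz x (k : int) : x \in H -> f (x *~ k) = f x *~ k.
Proof.
move=> Hx; case: k => n; first exact: additive_onMn.
by rewrite NegzE !mulrNz additive_onN ?subgroupMn // additive_onMn.
Qed.

End Subgroup.

Section Extension.
Variables (H : {set G}) (f : G -> qz) (g : G).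
Hypotheses (H_sub : is_subgroup H) (f_add : additive_on H f).

(* [H + <[g]>]; exponents below [#[g]] suffice since [g *+ #[g] = 0]. *)
Definition ext_set : {set G} := [set x | [exists k : 'I_#[g]%g, x - g *+ k \in H]].

Lemma mulrz_mod_order (k : int) : g *~ k = g *~ (k %% #[g]%g)%Z.
Proof.
rewrite {1}(divz_eq k #[g]%g) mulrzDr mulrzA -[_ *~ _ *~ _]mulrzA mulrC mulrzA.
by rewrite -pmulrn -zmodXgE expg_order mul0rz add0r.
Qed.

Lemma mem_ext_set x : reflect (exists k : int, x - g *~ k \in H) (x \in ext_set).
Proof.
rewrite inE; apply: (iffP existsP) => [[k Hk]|[k Hk]]; first by exists k; rewrite -pmulrn.
have o_gt0 : 0 < (#[g]%g : int) by rewrite ltz_nat order_gt0.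
have [m Em] : exists m : nat, (k %% #[g]%g)%Z = m.
  by exists `|(k %% #[g]%g)%Z|%N; rewrite gez0_abs ?modz_ge0 ?lt0r_neq0.
have lt_m : (m < #[g]%g)%N by rewrite -ltz_nat -Em ltz_pmod.
by exists (Ordinal lt_m); rewrite /= pmulrn -Em -mulrz_mod_order.
Qed.

Lemma ext_set_subgroup : is_subgroup ext_set.
Proof.
split; first by apply/mem_ext_set; exists 0; rewrite mulr0z subr0 subgroup0.
move=> x y /mem_ext_set[k Hk] /mem_ext_set[l Hl]; apply/mem_ext_set; exists (k - l).
have -> : x - y - g *~ (k - l) = (x - g *~ k) - (y - g *~ l).
  by rewrite mulrzBr !opprB addrACA [RHS]addrACA [- y + _]addrC.
exact: subgroupB.
Qed.

Lemma subset_ext_set : H \subset ext_set.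
Proof. by apply/subsetP => x Hx; apply/mem_ext_set; exists 0; rewrite mulr0z subr0. Qed.

Lemma mem_ext_set_gen : g \in ext_set.
Proof. by apply/mem_ext_set; exists 1; rewrite subrr subgroup0. Qed.

(* The possible values at [g] of an additive extension of [f] to [H + <[g]>]. *)
Definition compatible (t : qz) := forall k : int, g *~ k \in H -> f (g *~ k) = t *~ k.

Section ExtFun.
Variable t : qz.
Hypothesis t_compat : compatible t.

Definition ext_fun (x : G) : qz :=
  if [pick k : 'I_#[g]%g | x - g *+ k \in H] is Some k then f (x - g *+ k) + t *+ k
  else 0.

Lemma ext_funE x (k : int) : x - g *~ k \in H -> ext_fun x = f (x - g *~ k) + t *~ k.
Proof.
move=> Hk; rewrite /ext_fun; case: pickP => [j Hj|no_j]; last first.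
  have : x \in ext_set by apply/mem_ext_set; exists k.
  by rewrite inE => /existsP[j]; rewrite no_j.
have Ej : x - g *+ j = (x - g *~ k) + g *~ (k - (j : nat)%:Z).
  by rewrite mulrzBr addrA subrK pmulrn.
have Hkj : g *~ (k - (j : nat)%:Z) \in H.
  by have := subgroupB H_sub Hj Hk; rewrite Ej [_ + g *~ _]addrC addrK.
by rewrite Ej f_add // t_compat // pmulrn -addrA -mulrzDr subrK.
Qed.

Lemma ext_fun_additive : additive_on ext_set ext_fun.
Proof.
move=> x y /mem_ext_set[k Hk] /mem_ext_set[l Hl].
have Hkl : x + y - g *~ (k + l) = (x - g *~ k) + (y - g *~ l).
  by rewrite mulrzDr opprD addrACA.
rewrite (ext_funE Hk) (ext_funE Hl) (@ext_funE _ (k + l)) Hkl; last exact: subgroupD.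
by rewrite (f_add Hk Hl) mulrzDr addrACA.
Qed.

Lemma ext_fun_extends : {in H, ext_fun =1 f}.
Proof. by move=> x Hx; rewrite (@ext_funE x 0) mulr0z ?subr0 ?addr0. Qed.

Lemma ext_fun_gen : ext_fun g = t.
Proof.
by rewrite (@ext_funE g 1) ?mulr1z subrr ?subgroup0 // (additive_on0 H_sub f_add) add0r.
Qed.

End ExtFun.

Section CompatibleValue.

Let P k := (0 < k)%N && (g *+ k \in H).

Let P_exists : exists k, P k.
Proof. by exists #[g]%g; rewrite /P order_gt0 -zmodXgE expg_order subgroup0. Qed.

Let n := ex_minn P_exists.

Let n_gt0 : (0 < n)%N. Proof. by rewrite /n; case: (ex_minnP P_exists) => m /andP[]. Qed.
Let n_in : g *+ n \in H. Proof. by rewrite /n; case: (ex_minnP P_exists) => m /andP[]. Qed.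
Let n_min k : (0 < k)%N -> g *+ k \in H -> (n <= k)%N.
Proof.
by move=> k_gt0 Hk; rewrite /n; case: (ex_minnP P_exists) => m _; apply; rewrite /P k_gt0.
Qed.

Let order_mod_dvd (k : int) : g *~ k \in H -> (n %| k)%Z.
Proof.
move=> Hk; apply/dvdz_mod0P.
have [m Em] : exists m : nat, (k %% n)%Z = m.
  by exists `|(k %% n)%Z|%N; rewrite gez0_abs ?modz_ge0 // -lt0n.
have lt_mn : (m < n)%N by rewrite -ltz_nat -Em ltz_pmod ?ltz_nat.
have Hm : g *+ m \in H.
  rewrite pmulrn -Em /modz mulrzBr [(_ * _)%R]mulrC mulrzA subgroupB //.
  by rewrite subgroupMz // -pmulrn.
rewrite Em; case: m {Em} lt_mn Hm => // m lt_mn Hm.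
by have := n_min (ltn0Sn m) Hm; rewrite leqNgt lt_mn.
Qed.

Let compatible_of t : t *+ n = f (g *+ n) -> compatible t.
Proof.
move=> tn k /[dup] Hk /order_mod_dvd/dvdzP[q Ek]; rewrite Ek !(mulrC q) !mulrzA.
by rewrite -!pmulrn (additive_onMz H_sub f_add) // tn.
Qed.

Lemma exists_compatible : exists t, compatible t.
Proof. by have [t tn] := qz_divisible (f (g *+ n)) n_gt0; exists t; apply: compatible_of. Qed.

Lemma exists_compatible_neq0 :
  g \notin H -> {in H, forall x, f x = 0} -> exists2 t, compatible t & t != 0.
Proof.
move=> g_notin f0; have n_gt1 : (1 < n)%N.
  by rewrite ltn_neqAle n_gt0 andbT; apply: contraNneq g_notin => n1; rewrite -[g]mulr1n n1.
have [t tn t_neq0] := qz_torsion n_gt1; exists t => //.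
by apply: compatible_of; rewrite tn f0.
Qed.

End CompatibleValue.
End Extension.

Lemma extend_additive H f : is_subgroup H -> additive_on H f ->
  exists2 F : G -> qz, {morph F : x y / x + y} & {in H, F =1 f}.
Proof.
have [n] := ubnP #|~: H|; elim: n H f => // n IH H f lt_Hn H_sub f_add.
have [/subsetP HT|/subsetPn[g _ g_notin]] := boolP ([set: G] \subset H).
  by exists f => // x y; apply: f_add; apply: HT.
have [t t_compat] := exists_compatible g H_sub f_add.
have [|F F_add F_ext] :=
  IH _ _ _ (ext_set_subgroup g H_sub) (ext_fun_additive H_sub f_add t_compat).
  rewrite ltnS in lt_Hn; apply: leq_trans lt_Hn; apply: proper_card.
  rewrite properC; apply/properP; split; first exact: subset_ext_set.
  by exists g; first exact: mem_ext_set_gen.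
exists F => // x Hx.
by rewrite F_ext ?(subsetP (subset_ext_set H g)) ?(ext_fun_extends H_sub f_add).
Qed.

Lemma separating_character T w : is_subgroup T -> w \notin T ->
  exists chi : G -> qz,
    [/\ {morph chi : x y / x + y}, {in T, forall x, chi x = 0} & chi w != 0].
Proof.
move=> T_sub w_notin.
have zero_add : additive_on T (fun=> 0) by move=> x y _ _; rewrite addr0.
have [t t_compat t_neq0] := exists_compatible_neq0 T_sub zero_add w_notin (fun _ _ => erefl).
have [F F_add F_ext] :=
  extend_additive (ext_set_subgroup w T_sub) (ext_fun_additive T_sub zero_add t_compat).
exists F; split => // [x Tx|].
  by rewrite F_ext ?(subsetP (subset_ext_set T w)) ?(ext_fun_extends T_sub zero_add).
by rewrite F_ext ?mem_ext_set_gen // ext_fun_gen.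
Qed.

End Characters.

(* Not inferred by default; needed to apply the results above to [V ^ K]. *)
HB.instance Definition _ (T : finType) (U : finZmodType) := GRing.Zmodule.on {ffun T -> U}.

Section Glue.
Variables (R : finNzRingType) (V : finLmodType R) (p n : nat).
Implicit Types (a : {ffun 'I_p -> V}) (d : {ffun 'I_n -> V}).

Definition glue a d : {ffun 'I_(p + n) -> V} :=
  [ffun k => match split k with inl i => a i | inr j => d j end].

Lemma glue_lshift a d i : glue a d (lshift n i) = a i.
Proof. by rewrite ffunE -[lshift n i]/(unsplit (inl i)) unsplitK. Qed.

Lemma glue_rshift a d j : glue a d (rshift p j) = d j.
Proof. by rewrite ffunE -[rshift p j]/(unsplit (inr j)) unsplitK. Qed.

Definition glueE := (glue_lshift, glue_rshift).

Lemma glue0 : glue 0 0 = 0.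
Proof. by apply/ffunP => k; rewrite !ffunE; case: split => i; rewrite ffunE. Qed.

Lemma glueZD r a a' d d' : glue (r *: a + a') (r *: d + d') = r *: glue a d + glue a' d'.
Proof. by apply/ffunP => k; rewrite !ffunE; case: split => i; rewrite !ffunE. Qed.

Lemma glueB a a' d d' : glue (a - a') (d - d') = glue a d - glue a' d'.
Proof. by apply/ffunP => k; rewrite !ffunE; case: split => i; rewrite !ffunE. Qed.

Lemma glueK (u : {ffun 'I_(p + n) -> V}) :
  glue [ffun i => u (lshift n i)] [ffun j => u (rshift p j)] = u.
Proof. by apply/ffunP => k; rewrite -[k in RHS]splitK ffunE; case: split => i; rewrite ffunE. Qed.

Lemma sum_glue (phi : V -> qz) a d :
  \sum_(k < p + n) phi (glue a d k) = \sum_(i < p) phi (a i) + \sum_(j < n) phi (d j).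
Proof. by rewrite big_split_ord; congr (_ + _); apply: eq_bigr => i _; rewrite glueE. Qed.

End Glue.

Section Duality.
Variables (R : finNzRingType) (V : finLmodType R) (b : V -> V -> qz).
Hypotheses (b_biadd : biadditive b)
  (b_onto : forall f : V -> qz, additive_qz f -> exists v, forall w, f w = b v w).

Definition dotv K (x y : {ffun 'I_K -> V}) : qz := \sum_(i < K) b (x i) (y i).

Lemma dotv0r K (x : {ffun 'I_K -> V}) : dotv x 0 = 0.
Proof.
rewrite /dotv big1 // => i _; rewrite ffunE.
by apply: (addrI (b (x i) 0)); rewrite -(proj2 b_biadd) !addr0.
Qed.

Definition delta K (i : 'I_K) (v : V) : {ffun 'I_K -> V} :=
  [ffun j => if j == i then v else 0].

Lemma sum_delta K (y : {ffun 'I_K -> V}) : y = \sum_i delta i (y i).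
Proof.
apply/ffunP => j; rewrite sum_ffunE (bigD1 j) //= big1 => [|i /negPf ij].
  by rewrite !ffunE eqxx addr0.
by rewrite ffunE eq_sym ij.
Qed.

Lemma character_dotv K (chi : {ffun 'I_K -> V} -> qz) :
  {morph chi : x y / x + y} -> exists u, forall y, chi y = dotv u y.
Proof.
move=> chi_add; have chi0 : chi 0 = 0.
  by apply: (addrI (chi 0)); rewrite -chi_add !addr0.
have coord i : exists v, forall w, chi (delta i w) = b v w.
  apply: b_onto => v w; rewrite -chi_add; congr chi.
  by apply/ffunP => j; rewrite !ffunE; case: (j == i); rewrite ?addr0.
have [u Hu] := fin_all_exists coord; exists [ffun i => u i] => y.
rewrite {1}(sum_delta y) (big_morph chi chi_add chi0).
by apply: eq_bigr => i _; rewrite Hu ffunE.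
Qed.

Lemma dotv_separate K (T : {set {ffun 'I_K -> V}}) w : is_subgroup T -> w \notin T ->
  exists u, {in T, forall t, dotv u t = 0} /\ dotv u w != 0.
Proof.
move=> T_sub w_notin; have [chi [chi_add chiT chi_w]] := separating_character T_sub w_notin.
have [u Hu] := character_dotv chi_add.
by exists u; split => [t Tt|]; rewrite -Hu // chiT.
Qed.

Lemma dotv_glue p n (a a' : {ffun 'I_p -> V}) (d d' : {ffun 'I_n -> V}) :
  dotv (glue a d) (glue a' d') = dotv a a' + dotv d d'.
Proof. by rewrite /dotv big_split_ord; congr (_ + _); apply: eq_bigr => i _; rewrite !glueE. Qed.

End Duality.

Section Residual.
Variables (R : finNzRingType) (V : finLmodType R) (b : V -> V -> qz).
Hypotheses (b_biadd : biadditive b)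
  (b_onto : forall f : V -> qz, additive_qz f -> exists v, forall w, f w = b v w)
  (b_transpose : exists s : R, forall v w, b w v = b v (s *: w)).

Lemma code_subgroup N (C : {set {ffun 'I_N -> V}}) : is_code C -> is_subgroup C.
Proof.
case=> C0 C_lin; split => // x y Cx Cy.
by have := C_lin (-1) y x Cy Cx; rewrite scaleN1r addrC.
Qed.

Lemma codeZ N (C : {set {ffun 'I_N -> V}}) r x : is_code C -> x \in C -> r *: x \in C.
Proof. by case=> C0 C_lin Cx; have := C_lin r x 0 Cx C0; rewrite addr0. Qed.

Section Cancellation.
Variables (p n : nat) (L : {set {ffun 'I_(p + n) -> V}}) (D : {set {ffun 'I_n -> V}}).
Hypotheses (L_code : is_code L) (L_dual : self_dual b L).
Hypotheses (D_code : is_code D) (D_dual : self_dual b D).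

Definition residual : {set {ffun 'I_p -> V}} := [set a | [exists d in D, glue a d \in L]].

Lemma residualP a : reflect (exists2 d, d \in D & glue a d \in L) (a \in residual).
Proof.
rewrite inE; apply: (iffP existsP) => [[d /andP[]]|[d Dd Ld]]; first by exists d.
by exists d; apply/andP.
Qed.

Lemma residual_code : is_code residual.
Proof.
split; first by apply/residualP; exists 0; rewrite ?glue0; case: D_code; case: L_code.
move=> r x y /residualP[dx Ddx Lx] /residualP[dy Ddy Ly]; apply/residualP.
exists (r *: dx + dy); first by case: D_code => _; apply.
by rewrite glueZD; case: L_code => _; apply.
Qed.

Lemma residual_isotropic (Phi : {ffun V -> qz} -> Prop) :
  isotropic Phi L -> isotropic Phi D -> isotropic Phi residual.
Proof.
move=> L_iso D_iso a /residualP[d Dd La] phi Phi_phi.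
by have := L_iso _ La _ Phi_phi; rewrite sum_glue D_iso // addr0.
Qed.

Lemma residual_orthogonal a a' : a \in residual -> a' \in residual -> dotv b a a' = 0.
Proof.
move=> /residualP[d Dd La] /residualP[d' Dd' La'].
have := (L_dual (glue a d)).1 La _ La'; rewrite -/(dotv b (glue a d) (glue a' d')) dotv_glue.
by have -> : dotv b d d' = 0 := (D_dual d).1 Dd _ Dd'; rewrite addr0.
Qed.

(* [L + (0 (+) D)], the code spanned by [L] and [D] placed on the last [n] coordinates. *)
Definition sum_code : {set {ffun 'I_(p + n) -> V}} :=
  [set y | [exists d in D, y - glue 0 d \in L]].

Lemma sum_codeP y : reflect (exists2 d, d \in D & y - glue 0 d \in L) (y \in sum_code).
Proof.
rewrite inE; apply: (iffP existsP) => [[d /andP[]]|[d Dd Ld]]; first by exists d.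
by exists d; apply/andP.
Qed.

Lemma sum_code_subgroup : is_subgroup sum_code.
Proof.
have [L0 LB] := code_subgroup L_code; have [D0 DB] := code_subgroup D_code.
split; first by apply/sum_codeP; exists 0; rewrite ?glue0 ?subr0.
move=> y y' /sum_codeP[d Dd Ly] /sum_codeP[d' Dd' Ly']; apply/sum_codeP.
exists (d - d'); first exact: DB.
have -> : y - y' - glue 0 (d - d') = (y - glue 0 d) - (y' - glue 0 d').
  have -> : glue 0 (d - d') = glue 0 d - glue 0 d' :> {ffun 'I_(p + n) -> V}.
    by rewrite -glueB subr0.
  by rewrite !opprB addrACA [RHS]addrACA [- y' + _]addrC.
exact: LB.
Qed.

Lemma residual_perp x : (forall a, a \in residual -> dotv b x a = 0) -> x \in residual.
Proof.
move=> x_perp; have [/sum_codeP[d Dd Lxd]|x_notin] := boolP (glue x 0 \in sum_code).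
  apply/residualP; exists (- d); first by rewrite subgroupN //; apply: code_subgroup.
  by have -> : glue x (- d) = glue x 0 - glue 0 d by rewrite -glueB subr0 sub0r.
have [u [u_perp u_x]] := dotv_separate b_onto sum_code_subgroup x_notin.
set ul := [ffun i => u (lshift n i)]; set ur := [ffun j => u (rshift p j)].
have Eu : u = glue ul ur by rewrite glueK.
have Lu : u \in L.
  apply/L_dual => c Lc; apply: u_perp; apply/sum_codeP; exists 0; rewrite ?glue0 ?subr0 //.
  by case: D_code.
have Dur : ur \in D.
  apply/D_dual => d Dd; have := u_perp (glue 0 d).
  rewrite Eu dotv_glue dotv0r // add0r; apply; apply/sum_codeP; exists d; rewrite ?subrr //.
  by case: L_code.
have Rul : ul \in residual by apply/residualP; exists ur => //; rewrite -Eu.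
have [s Hs] := b_transpose.
move: u_x; rewrite Eu dotv_glue dotv0r // addr0.
have -> : dotv b ul x = dotv b x (s *: ul).
  by rewrite /dotv; apply: eq_bigr => i _; rewrite Hs !ffunE.
by rewrite x_perp ?eqxx //; apply: codeZ residual_code Rul.
Qed.

Lemma residual_self_dual : self_dual b residual.
Proof.
move=> x; split => [Rx c Rc|]; first exact: residual_orthogonal.
exact: residual_perp.
Qed.

End Cancellation.

Lemma type_length_cancel (Phi : {ffun V -> qz} -> Prop) p n : (0 < p)%N ->
  type_length b Phi (p + n)%N -> type_length b Phi n -> type_length b Phi p.
Proof.
move=> p_gt0 [_ [L [L_code L_dual L_iso]]] [_ [D [D_code D_dual D_iso]]].
split => //; exists (residual L D); split.
- exact: residual_code.
- exact: residual_self_dual.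
- exact: residual_isotropic.
Qed.

End Residual.

Lemma exists_is_min_of (S : nat -> Prop) : (exists n, S n) -> exists n, is_min_of S n.
Proof.
move=> S_ex; have [n [[Sn n_min] _]] :=
  @dec_inh_nat_subset_has_unique_least_element S (fun m => classic (S m)) S_ex.
by exists n; split => // m Sm; apply/leP; apply: n_min.
Qed.

Lemma is_min_of_gcd (S : nat -> Prop) n : (0 < n)%N -> is_min_of S n ->
  (forall m, (0 < m)%N -> S (m + n)%N -> S m) -> is_gcd_of S n.
Proof.
move=> n_gt0 [Sn n_min] S_cancel; split => [m|e e_dvd]; last exact: e_dvd.
elim/ltn_ind: m => m IH Sm.
case: (ltngtP n m) (n_min _ Sm) => [lt_nm _|//|-> _]; last exact: dvdnn.
  have Em : (m - n + n)%N = m by rewrite subnK // ltnW.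
  have S_mn : S (m - n)%N by apply: S_cancel; rewrite ?subn_gt0 ?Em.
  rewrite -Em dvdn_add ?dvdnn // IH // ltn_subrL n_gt0.
  exact: leq_trans n_gt0 (ltnW lt_nm).
Qed.

Theorem mainTheorem3 (R : finNzRingType) (V : finLmodType R)
    (b : V -> V -> qz) (Phi : {ffun V -> qz} -> Prop) :
  form_ring b Phi ->
  (exists N : nat, type_length b Phi N) ->
  exists n : nat, is_min_of (type_length b Phi) n /\ is_gcd_of (type_length b Phi) n.
Proof.
move=> [[b_biadd [_ b_onto] b_tau _] _ _ _] S_ex.
have b_transpose : exists s : R, forall v w, b w v = b v (s *: w).
  have [s Hs] := b_tau 1; exists s => v w.
  by have := Hs v w; rewrite /bil_tau /bil_r scale1r.
have [n [Sn n_min]] := exists_is_min_of S_ex.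
have n_gt0 : (0 < n)%N by case: Sn.
exists n; split => //; apply: is_min_of_gcd n_gt0 _ _ => // m m_gt0 S_mn.
exact: (type_length_cancel b_biadd b_onto b_transpose m_gt0 S_mn Sn).
Qed.
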